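(* Let $\mathbf A$ be a finite algebra belonging to a congruence modular variety with $\mathrm{typ}\{\mathbf A\}\subseteq\{\mathbf 4\}$, and let $\alpha$ be a join irreducible congruence of $\mathbf A$. Then (1) $a<\!>_\alpha b$ whenever $\{a,b\}$ is a $(\delta,\delta')$-minimal set for some covering pair $\delta\prec\delta'\le\alpha$ of congruences; (2) for every $a\in A$ the graph $(a/\alpha,<\!>_\alpha)$ is connected; (3) all unary polynomials of $\mathbf A$ preserve the relation $\le_\alpha$, and all polynomials of $\mathbf A$ preserve the transitive closure of $\le_\alpha$.
   Context: Tame congruence theory (Hobby–McKenzie): for congruences $\delta<\delta'$ of a finite algebra, $U_{\mathbf A}(\delta,\delta')$ is the set of all $f(A)$ with $f$ a unary polynomial and $f(\delta')\not\subseteq\delta$; its inclusion-minimal members are the $(\delta,\delta')$-minimal sets. $\mathrm{typ}\{\mathbf A\}$ is the set of types of all prime quotients; type $\mathbf 4$ is the lattice type. For a join irreducible congruence $\alpha$ let $\alpha^-$ be its unique lower cover; under the hypotheses an $(\alpha^-,\alpha)$-minimal set is a $2$-element set $\{0,1\}$ on which the induced algebra is polynomially equivalent to the $2$-element lattice; fix one and label it so that $0<1$ in that lattice order. Define $a\le_\alpha b$ iff there is a unary polynomial $f$ of $\mathbf A$ with $f(1)=b$ and $f(0)=a$. Write $a<\!>_\alpha b$ iff ($a\le_\alpha b$ or $b\le_\alpha a$) and $a\ne b$. ''Belongs to a congruence modular variety'' means the variety generated by $\mathbf A$ is congruence modular. *)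

From mathcomp Require Import all_boot.
From Stdlib Require Relations.
Set Implicit Arguments.
Unset Strict Implicit.
Unset Printing Implicit Defensive.

Definition ops (T F : Type) (ar : F -> nat) := forall f : F, ('I_(ar f) -> T) -> T.

Inductive pgen (T F : Type) (ar : F -> nat) (op : ops T ar) (n : nat)
  : (('I_n -> T) -> T) -> Prop :=
| pg_proj (i : 'I_n) : pgen op (fun x => x i)
| pg_const (c : T) : pgen op (fun _ => c)
| pg_app (f : F) (g : 'I_(ar f) -> ('I_n -> T) -> T) :
    (forall j, pgen op (g j)) -> pgen op (fun x => op f (fun j => g j x)).

Definition is_poly (T F : Type) (ar : F -> nat) (op : ops T ar) (n : nat)
  (p : ('I_n -> T) -> T) : Prop :=
  exists q, pgen op q /\ forall x, p x = q x.

Definition is_upoly (T F : Type) (ar : F -> nat) (op : ops T ar) (f : T -> T) : Prop :=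
  is_poly op (fun v : 'I_1 -> T => f (v ord0)).

Inductive term (F : Type) (ar : F -> nat) : Type :=
| Var of nat
| App (f : F) of ('I_(ar f) -> term ar).

Fixpoint teval (T F : Type) (ar : F -> nat) (op : ops T ar) (v : nat -> T)
  (t : term ar) : T :=
  match t with
  | Var i => v i
  | App f ts => op f (fun j => teval op v (ts j))
  end.

(* (B, opB) satisfies every identity s = t that holds in (T, op), i.e. B lies
   in the variety generated by (T, op)  (= Mod Id(T), = HSP(T) by Birkhoff). *)
Definition in_variety_gen (T F : Type) (ar : F -> nat) (op : ops T ar)
  (B : Type) (opB : ops B ar) : Prop :=
  forall s t : term ar,
    (forall v : nat -> T, teval op v s = teval op v t) ->
    (forall v : nat -> B, teval opB v s = teval opB v t).

Definition is_congP (B F : Type) (ar : F -> nat) (opB : ops B ar)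
  (th : B -> B -> Prop) : Prop :=
  Relation_Definitions.equivalence B th /\
  forall f (x y : 'I_(ar f) -> B),
    (forall j, th (x j) (y j)) -> th (opB f x) (opB f y).

Definition cjoinP (B F : Type) (ar : F -> nat) (opB : ops B ar)
  (a b : B -> B -> Prop) : B -> B -> Prop :=
  fun x y => forall th, is_congP opB th ->
    (forall u v, a u v -> th u v) -> (forall u v, b u v -> th u v) -> th x y.

(* Con(B) is a modular lattice: a <= c implies (a v b) ^ c <= a v (b ^ c)
   (the reverse inclusion always holds) *)
Definition cong_modular (B F : Type) (ar : F -> nat) (opB : ops B ar) : Prop :=
  forall a b c, is_congP opB a -> is_congP opB b -> is_congP opB c ->
    (forall u v, a u v -> c u v) ->
    forall x y, cjoinP opB a b x y /\ c x y ->
      cjoinP opB a (fun u v => b u v /\ c u v) x y.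

Definition gen_CM_variety (T F : Type) (ar : F -> nat) (op : ops T ar) : Prop :=
  forall (B : Type) (opB : ops B ar), in_variety_gen op opB -> cong_modular opB.

Section Finite.
Variables (A : finType) (F : Type) (ar : F -> nat) (op : ops A ar).

Definition is_cong (th : rel A) : Prop :=
  [/\ reflexive th, symmetric th, transitive th &
      forall f (x y : 'I_(ar f) -> A),
        (forall j, th (x j) (y j)) -> th (op x) (op y)].

Definition subrel_ (a b : rel A) : Prop := forall x y, a x y -> b x y.

Definition covers (d d' : rel A) : Prop :=
  [/\ is_cong d, is_cong d', subrel_ d d', (exists x y, d' x y /\ ~~ d x y) &
      forall th, is_cong th -> subrel_ d th -> subrel_ th d' ->
        subrel_ th d \/ subrel_ d' th].

Definition join_irreducible (al : rel A) : Prop :=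
  [/\ is_cong al, (exists x y, al x y /\ x != y) &
      forall b c, is_cong b -> is_cong c -> subrel_ b al -> subrel_ c al ->
        (forall th, is_cong th -> subrel_ b th -> subrel_ c th -> subrel_ al th) ->
        subrel_ al b \/ subrel_ al c].

Definition in_UA (d d' : rel A) (U : {set A}) : Prop :=
  exists f : A -> A, [/\ is_upoly op f, U = f @: setT &
                         exists x y, d' x y /\ ~~ d (f x) (f y)].

Definition minimal_set (d d' : rel A) (U : {set A}) : Prop :=
  in_UA d d' U /\ forall V, in_UA d d' V -> V \subset U -> V = U.

Definition trace (d d' : rel A) (U N : {set A}) : Prop :=
  exists x, [/\ x \in U, (exists y, [/\ y \in U, d' x y & ~~ d x y]) &
                N = [set y in U | d' x y]].

Definition lat2_ops : ops bool (fun _ : bool => 2) :=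
  fun b v => if b then v ord0 && v ord_max else v ord0 || v ord_max.

(* The algebra A|_N / th|_N is polynomially equivalent to the 2-element
   lattice via the isomorphism (A|_N)/(th|_N) -> bool induced by h :
   h maps N onto bool with kernel th|_N, and for every n the n-ary polynomial
   operations of A|_N / th|_N (induced by the polynomials of A preserving N),
   transported along h, are exactly the n-ary lattice polynomials of bool. *)
Definition induced_poly (N : {set A}) (h : A -> bool) (n : nat)
  (q : ('I_n -> bool) -> bool) : Prop :=
  exists p, [/\ is_poly op p,
    (forall x : 'I_n -> A, (forall j, x j \in N) -> p x \in N) &
    (forall x : 'I_n -> A, (forall j, x j \in N) -> h (p x) = q (fun j => h (x j)))].

Definition poly_equiv_lat2 (N : {set A}) (th : rel A) (h : A -> bool) : Prop :=
  [/\ (exists2 x, x \in N & h x = false), (exists2 x, x \in N & h x = true),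
      (forall x y, x \in N -> y \in N -> (th x y <-> h x = h y)) &
      forall n q, induced_poly N h (n := n) q <-> is_poly (n := n) lat2_ops q].

(* typ{A} subset {4}: every prime quotient has the lattice type *)
Definition typ_sub4 : Prop :=
  forall d d', covers d d' -> forall U, minimal_set d d' U ->
    forall N, trace d d' U N -> exists h, poly_equiv_lat2 N d h.

(* the relation <=_alpha w.r.t. the fixed labelled minimal set {o, i} *)
Definition le_al (o i : A) (a b : A) : Prop :=
  exists f, [/\ is_upoly op f, f i = b & f o = a].

Definition ltgt_al (o i : A) (a b : A) : Prop :=
  (le_al o i a b \/ le_al o i b a) /\ a <> b.

End Finite.

(* The congruence generated by a set B of pairs is the reflexive-transitive
   closure of the pairs (g p, g q), (g q, g p) with g a unary polynomial and
   (p, q) in B (Mal'cev).  A join irreducible congruence alpha with lower cover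
   alpha^- is generated by any pair it separates from alpha^-, in particular by
   (0, 1).  So any two alpha-related elements are linked by a chain of steps
   {g 0, g 1}, each of which is an instance of <=_alpha; this gives (2).  For (1),
   the covering delta < delta' yields a unary polynomial e with range {a, b} and
   e a <> e b (otherwise the congruence generated by delta and (a, b) would be
   collapsed by the polynomial witnessing {a, b} in U(delta, delta')); applying e
   to a chain from a to b produces a step with {e (g 0), e (g 1)} = {a, b}.
   Part (3) composes polynomials and changes one argument at a time. *)
From mathcomp Require Import all_boot boolp.
From Stdlib Require Relations.
Set Implicit Arguments.
Unset Strict Implicit.
Unset Printing Implicit Defensive.
Import Relation_Operators.

Section Polynomials.
Variables (T F : Type) (ar : F -> nat) (op : ops T ar).

Lemma is_polyE n (p : ('I_n -> T) -> T) : is_poly op p <-> pgen op p.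
Proof. by split=> [[q [qP /funext->]]|pP] //; exists p. Qed.

Lemma pgen_comp n m (q : ('I_n -> T) -> T) (s : 'I_n -> ('I_m -> T) -> T) :
  pgen op q -> (forall j, pgen op (s j)) -> pgen op (fun v => q (fun j => s j v)).
Proof.
move=> qP sP; elim: qP => [j|c|f g _ IH]; [exact: sP|exact: pg_const|].
exact: pg_app IH.
Qed.

Lemma is_poly_comp n m (p : ('I_n -> T) -> T) (s : 'I_n -> ('I_m -> T) -> T) :
  is_poly op p -> (forall j, is_poly op (s j)) ->
  is_poly op (fun v => p (fun j => s j v)).
Proof.
move=> /is_polyE pP sP; apply/is_polyE; apply: pgen_comp pP _ => j.
exact/is_polyE.
Qed.

Lemma is_poly_op f : is_poly op (@op f).
Proof. by apply/is_polyE; apply: pg_app => j; apply: pg_proj. Qed.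

Lemma is_upoly_comp g h : is_upoly op g -> is_upoly op h -> is_upoly op (g \o h).
Proof. by move=> gP hP; apply: (@is_poly_comp 1 1 _ (fun _ v => h (v ord0)) gP). Qed.

Lemma is_upoly_cst c : is_upoly op (fun _ => c).
Proof. by apply/is_polyE; apply: pg_const. Qed.

Lemma is_upoly_id : is_upoly op id.
Proof. by apply/is_polyE; apply: pg_proj. Qed.

Lemma is_upoly_upd n (p : ('I_n -> T) -> T) (x : 'I_n -> T) k :
  is_poly op p -> is_upoly op (fun t => p (fun j => if j == k then t else x j)).
Proof.
move=> pP; apply: (@is_poly_comp n 1 p _ pP) => j.
by case: (j == k); [apply: is_upoly_id|apply: is_upoly_cst].
Qed.

Lemma poly_compat_of_upoly (R : T -> T -> Prop) n (p : ('I_n -> T) -> T) :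
  (forall x, R x x) -> (forall x y z, R x y -> R y z -> R x z) ->
  (forall g, is_upoly op g -> forall x y, R x y -> R (g x) (g y)) ->
  is_poly op p -> forall x y, (forall j, R (x j) (y j)) -> R (p x) (p y).
Proof.
move=> Rrefl Rtrans Rupoly pP x y xy.
pose mix (s : seq 'I_n) j := if j \in s then y j else x j.
have mixP s : R (p x) (p (mix s)).
  elim: s => [|k s IH]; first exact: Rrefl.
  apply: Rtrans IH _.
  have -> : mix s = (fun j => if j == k then mix s k else mix s j).
    by apply: funext => j; case: eqP => // ->.
  have -> : mix (k :: s) = (fun j => if j == k then y k else mix s j).
    by apply: funext => j; rewrite /mix inE; case: eqP => // ->.
  apply: Rupoly (is_upoly_upd _ _ pP) _ _ _.
  by rewrite /mix; case: (k \in s); [apply: Rrefl|apply: xy].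
have -> : y = mix (enum 'I_n) by apply: funext => j; rewrite /mix mem_enum.
exact: mixP.
Qed.

End Polynomials.

Section GeneratedCongruence.
Variables (A : finType) (F : Type) (ar : F -> nat) (op : ops A ar).

Lemma upoly_cong (th : rel A) g : is_cong op th -> is_upoly op g ->
  forall x y, th x y -> th (g x) (g y).
Proof.
move=> [threfl _ _ thop] /is_polyE gP x y xy.
have polyP n (q : ('I_n -> A) -> A) : pgen op q -> th (q (fun=> x)) (q (fun=> y)).
  by elim=> // f h _ IH; apply: thop.
exact: polyP gP.
Qed.

Lemma cong_meet (th1 th2 : rel A) : is_cong op th1 -> is_cong op th2 ->
  is_cong op (fun x y => th1 x y && th2 x y).
Proof.
move=> [r1 s1 t1 c1] [r2 s2 t2 c2]; split=> [x|x y|y x z|f x y xy].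
- by rewrite r1 r2.
- by rewrite s1 s2.
- by move=> /andP[xy1 xy2] /andP[yz1 yz2]; rewrite (t1 y x z xy1 yz1) (t2 y x z xy2 yz2).
- by apply/andP; split; [apply: c1|apply: c2] => j; case/andP: (xy j).
Qed.

Definition pair_rel (a b : A) (p q : A) : Prop := p = a /\ q = b.

Definition malcev_step (B : A -> A -> Prop) (u v : A) : Prop :=
  exists g p q, [/\ is_upoly op g, B p q & u = g p /\ v = g q \/ u = g q /\ v = g p].

Definition cg_chain (B : A -> A -> Prop) : A -> A -> Prop :=
  clos_refl_trans A (malcev_step B).

Definition Cg (B : A -> A -> Prop) : rel A := fun x y => `[< cg_chain B x y >].

Variable B : A -> A -> Prop.

Lemma cg_chain_ind (R : A -> A -> Prop) :
  (forall x, R x x) -> (forall x y, R x y -> R y x) ->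
  (forall x y z, R x y -> R y z -> R x z) ->
  (forall g p q, is_upoly op g -> B p q -> R (g p) (g q)) ->
  forall x y, cg_chain B x y -> R x y.
Proof.
move=> Rrefl Rsym Rtrans Rstep x y.
elim=> [u v [g [p [q [gP pq [[-> ->]|[-> ->]]]]]]|//|u w v _ uw _ wv].
- exact: Rstep.
- exact/Rsym/Rstep.
- exact: Rtrans uw wv.
Qed.

Lemma cg_chain_base p q : B p q -> cg_chain B p q.
Proof.
by move=> pq; apply: rt_step; exists id, p, q; split; [apply: is_upoly_id|..|left].
Qed.

Lemma cg_chain_sym x y : cg_chain B x y -> cg_chain B y x.
Proof.
elim=> [u v [g [p [q [gP pq uv]]]]|u|u w v _ wu _ vw].
- apply: rt_step; exists g, p, q; split => //.
  by case: uv => -[-> ->]; [right|left].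
- exact: rt_refl.
- exact: rt_trans vw wu.
Qed.

Lemma cg_chain_upoly f : is_upoly op f -> forall x y,
  cg_chain B x y -> cg_chain B (f x) (f y).
Proof.
move=> fP x y; elim=> [u v [g [p [q [gP pq uv]]]]|u|u w v _ uw _ wv].
- apply: rt_step; exists (f \o g), p, q; split; [exact: is_upoly_comp|done|].
  by case: uv => -[-> ->]; [left|right].
- exact: rt_refl.
- exact: rt_trans uw wv.
Qed.

Lemma Cg_cong : is_cong op (Cg B).
Proof.
split=> [x|x y|y x z /asboolP xy /asboolP yz|f x y xy].
- exact/asboolP/rt_refl.
- by apply/asboolP/asboolP; apply: cg_chain_sym.
- by apply/asboolP; apply: rt_trans xy yz.
- apply/asboolP/(poly_compat_of_upoly _ _ cg_chain_upoly (is_poly_op op f)) => [u|u v w|j].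
  + exact: rt_refl.
  + exact: rt_trans.
  + exact/asboolP/xy.
Qed.

Lemma cg_chain_min (th : rel A) : is_cong op th -> (forall p q, B p q -> th p q) ->
  forall x y, cg_chain B x y -> th x y.
Proof.
move=> thC Bth; have [threfl thsym thtrans _] := thC.
apply: (cg_chain_ind (R := th)) => [//|x y|x y z|g p q gP /Bth].
- by rewrite thsym.
- exact: thtrans.
- exact: (upoly_cong thC gP).
Qed.

End GeneratedCongruence.

Section CoveringPairs.
Variables (A : finType) (F : Type) (ar : F -> nat) (op : ops A ar).

Lemma in_UA_pair (d d' : rel A) a b : is_cong op d -> is_cong op d' ->
  in_UA op d d' [set a; b] -> d' a b /\ ~~ d a b.
Proof.
move=> dC d'C [f [fP fA [x [y [d'xy dfxy]]]]].
have d'fxy := upoly_cong d'C fP d'xy.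
have [drefl dsym _ _] := dC; have [_ d'sym _ _] := d'C.
have fAP t : f t \in [set a; b] by rewrite fA imset_f.
move: (fAP x) (fAP y) d'fxy dfxy; rewrite !inE.
by case/orP=> /eqP-> /orP[]/eqP->; rewrite ?drefl // d'sym dsym; split.
Qed.

Lemma join_irreducible_generated (al alm : rel A) c e :
  join_irreducible op al -> covers op alm al -> al c e -> ~~ alm c e ->
  forall x y, al x y -> cg_chain op (pair_rel c e) x y.
Proof.
move=> [alC _ alJI] [almC _ almal _ almcov] alce almce.
have Cg_al x y : Cg op (pair_rel c e) x y -> al x y.
  by move/asboolP; apply: cg_chain_min => // p q [-> ->].
have Cg_ce : Cg op (pair_rel c e) c e by apply/asboolP/cg_chain_base.
have Cg_almP th : is_cong op th -> subrel_ (Cg op (pair_rel c e)) th ->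
    subrel_ alm th -> subrel_ al th.
  move=> thC Cgth almth.
  have almth_al : subrel_ alm (fun x y => th x y && al x y).
    by move=> x y xy; rewrite almth // almal.
  have th_al_al : subrel_ (fun x y => th x y && al x y) al by move=> x y /andP[].
  have [thalm|alth] := almcov _ (cong_meet thC alC) almth_al th_al_al.
  - by rewrite thalm ?Cgth ?alce in almce.
  - by move=> x y /alth/andP[].
have [alCg|alalm] := alJI _ _ (Cg_cong op _) almC Cg_al almal Cg_almP.
- by move=> x y /alCg/asboolP.
- by rewrite alalm in almce.
Qed.

Lemma UA_pair_separated (d d' : rel A) a b :
  covers op d d' -> in_UA op d d' [set a; b] ->
  exists e, [/\ is_upoly op e, forall t, e t \in [set a; b] & e a != e b].
Proof.
move=> [dC d'C dd' _ dcov] abUA; have [d'ab dab] := in_UA_pair dC d'C abUA.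
have [e0 [e0P e0A [x [y [d'xy de0xy]]]]] := abUA.
apply: contrapT => nosep.
have collapse g : is_upoly op g -> (forall t, g t \in [set a; b]) -> g a = g b.
  by move=> gP gA; apply: contrapT => /eqP neq; apply: nosep; exists g.
pose th := Cg op (fun p q => d p q \/ pair_rel a b p q).
have th_base p q : d p q \/ pair_rel a b p q -> th p q.
  by move=> pq; apply/asboolP/cg_chain_base.
have d_th : subrel_ d th by move=> p q pq; apply: th_base; left.
have th_d' : subrel_ th d'.
  by move=> p q /asboolP; apply: cg_chain_min => // p' q' [/dd'|[-> ->]].
have [thd|d'th] := dcov th (Cg_cong op _) d_th th_d'.
- by move: dab; rewrite thd // th_base //; right.
- move/negP: de0xy; apply; have /asboolP := d'th _ _ d'xy.
  have [drefl dsym dtrans _] := dC.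
  apply: (cg_chain_ind (R := fun u v => d (e0 u) (e0 v))) => [//|u v|u v w|g p q gP].
  + by rewrite dsym.
  + exact: dtrans.
  + have e0gP : is_upoly op (e0 \o g) by apply: is_upoly_comp.
    case=> [pq|[-> ->]]; first exact: (upoly_cong dC e0gP).
    by rewrite [e0 (g a)](collapse (e0 \o g)) // => t; rewrite /= e0A imset_f.
Qed.

End CoveringPairs.

Section LatticeOrder.
Variables (A : finType) (F : Type) (ar : F -> nat) (op : ops A ar) (o i : A).

Local Notation le_al := (le_al op o i).
Local Notation ltgt_al := (ltgt_al op o i).
Local Notation cg_oi := (cg_chain op (pair_rel o i)).

Lemma le_al_refl x : le_al x x.
Proof. by exists (fun=> x); split=> //; apply: is_upoly_cst. Qed.

Lemma le_al_upoly f : is_upoly op f -> forall x y, le_al x y -> le_al (f x) (f y).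
Proof. by move=> fP x y [g [gP <- <-]]; exists (f \o g); split=> //; apply: is_upoly_comp. Qed.

Lemma clos_le_al_poly n (p : ('I_n -> A) -> A) : is_poly op p ->
  forall x y, (forall j, clos_trans A le_al (x j) (y j)) -> clos_trans A le_al (p x) (p y).
Proof.
apply: poly_compat_of_upoly => [x|x y z|f fP x y].
- exact/t_step/le_al_refl.
- exact: t_trans.
- by elim=> [u v /(le_al_upoly fP)|u v w _ uv _ vw]; [apply: t_step|apply: t_trans uv vw].
Qed.

Lemma malcev_step_le_al u v : malcev_step op (pair_rel o i) u v -> le_al u v \/ le_al v u.
Proof. by case=> g [_ [_ [gP [-> ->] [[-> ->]|[-> ->]]]]]; [left|right]; exists g. Qed.

Lemma UA_pair_ltgt_al (d d' : rel A) a b : covers op d d' ->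
  in_UA op d d' [set a; b] -> cg_oi a b -> ltgt_al a b.
Proof.
move=> dcov abUA ab; have [e [eP eA eab]] := UA_pair_separated dcov abUA.
have [g gP egoi] : exists2 g, is_upoly op g & e (g o) != e (g i).
  apply: contrapT => sep; move/eqP: eab; apply.
  apply: (cg_chain_ind (R := fun u v => e u = e v)) ab => // [u v w -> //|g p q gP [-> ->]].
  by apply: contrapT => /eqP ne; apply: sep; exists g.
have egP : is_upoly op (e \o g) by apply: is_upoly_comp.
split; last by move=> abE; rewrite abE eqxx in eab.
move: (eA (g o)) (eA (g i)) egoi; rewrite !inE.
by case/orP=> /eqP egoE /orP[]/eqP egiE; rewrite egoE egiE ?eqxx // => _;
  [left|right]; exists (e \o g); split; rewrite /= ?egoE ?egiE.
Qed.

Lemma cg_class_connected (al : rel A) : is_cong op al ->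
  (forall x y, al x y <-> cg_oi x y) ->
  forall a x y, al a x -> al a y ->
    clos_refl_trans A (fun u v => [/\ al a u, al a v & ltgt_al u v]) x y.
Proof.
move=> [_ alsym altrans _] alE a x y ax ay.
have /alE xy : al x y by rewrite (altrans a) // alsym.
move: ax; elim: xy => [u v uv|u|u w v /alE uw IHuw _ IHwv] au; last 2 first.
- exact: rt_refl.
- exact: rt_trans (IHuw au) (IHwv (altrans u a w au uw)).
have av : al a v by apply: altrans au _; apply/alE/rt_step.
have [->|neq] := eqVneq u v; first exact: rt_refl.
by apply: rt_step; split=> //; split; [apply: malcev_step_le_al|apply/eqP].
Qed.

End LatticeOrder.

Theorem lemma8p2 (A : finType) (F : Type) (ar : F -> nat) (op : ops A ar)
  (al alm : rel A) (o i : A) :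
  gen_CM_variety op ->
  typ_sub4 op ->
  join_irreducible op al ->
  covers op alm al ->
  minimal_set op alm al [set o; i] ->
  o != i ->
  (exists h, [/\ poly_equiv_lat2 op [set o; i] (fun x y => x == y) h,
                 h o = false & h i = true]) ->
  [/\ (* (1) *)
      (forall d d' a b, covers op d d' -> subrel_ d' al ->
         minimal_set op d d' [set a; b] -> ltgt_al op o i a b),
      (* (2) *)
      (forall a x y, al a x -> al a y ->
         Relation_Operators.clos_refl_trans A (fun u v => [/\ al a u, al a v & ltgt_al op o i u v]) x y) &
      (* (3) *)
      (forall f, is_upoly op f -> forall x y, le_al op o i x y -> le_al op o i (f x) (f y))
      /\ (forall n (p : ('I_n -> A) -> A), is_poly op p ->
            forall x y : 'I_n -> A,
              (forall j, Relation_Operators.clos_trans A (le_al op o i) (x j) (y j)) ->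
              Relation_Operators.clos_trans A (le_al op o i) (p x) (p y))].
Proof.
move=> _ _ alJI alcov [oiUA _] _ _.
have [almC alC _ _ _] := alcov.
have [al_oi alm_oi] := in_UA_pair almC alC oiUA.
have alE x y : al x y <-> cg_chain op (pair_rel o i) x y.
  split; first exact: join_irreducible_generated alJI alcov al_oi alm_oi x y.
  by apply: cg_chain_min => // p q [-> ->].
split.
- move=> d d' a b dcov d'al [abUA _].
  have [dC d'C _ _ _] := dcov.
  have [d'ab _] := in_UA_pair dC d'C abUA.
  exact/(UA_pair_ltgt_al dcov abUA)/alE/d'al.
- exact: cg_class_connected.
- by split; [apply: le_al_upoly|apply: clos_le_al_poly].
Qed.
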